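(* Let $(\Omega,\mathcal E_\Omega)$ be a finite-dimensional generalized probabilistic theory whose state space $\Omega$ is transitive and whose positive cone $V_+$ is self-dual with respect to $\langle\cdot,\cdot\rangle_{GL(\Omega)}$. Let $F=\{f_a\}_{a\in A}$ and $G=\{g_b\}_{b\in B}$ be ideal observables on $\Omega$ with outcome sets finite metric spaces $(A,d_A)$, $(B,d_B)$, and let $\widetilde M^{FG}=\{\widetilde m^{FG}_{ab}\}_{(a,b)\in A\times B}$ be an arbitrary observable on $A\times B$ with marginals $\widetilde M^F=\{\sum_b\widetilde m^{FG}_{ab}\}_a$ and $\widetilde M^G=\{\sum_a\widetilde m^{FG}_{ab}\}_b$. Then for all $\epsilon_1,\epsilon_2\in(0,1]$ with $\epsilon_1+\epsilon_2\le1$ there exists a state $\omega\in\Omega$ such that $$D_W(\widetilde M^F,F)\ge\frac{\epsilon_1}{2}W_{\epsilon_1+\epsilon_2}(\omega^F),\qquad D_W(\widetilde M^G,G)\ge\frac{\epsilon_2}{2}W_{\epsilon_1+\epsilon_2}(\omega^G).$$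
   Context: Setting: $V=\mathbb R^{N+1}$ with Euclidean inner product $(\cdot,\cdot)_E$. A state space $\Omega\subset V$ is a compact convex set with $\mathrm{span}(\Omega)=V$ and $0\notin\mathrm{aff}(\Omega)$; $V_+=\{\lambda\omega:\lambda\ge0,\omega\in\Omega\}$; the unit effect $u\in V^*$ satisfies $u(\omega)=1$ on $\Omega$; effects are $\mathcal E_\Omega=\{e\in V^*:0\le e(\omega)\le1\ \forall\omega\in\Omega\}$. An observable with finite outcome set $X$ is a family $\{e_x\}_{x\in X}$ of effects with $\sum_x e_x=u$ (the trivial observable $\{u\}$ is excluded). $\Omega^{\mathrm{ext}}$: extreme points of $\Omega$. An effect is pure if it is an extreme point of $\mathcal E_\Omega$; indecomposable if $e\neq0$ and $e=e_1+e_2$ with $e_1,e_2\in\mathcal E_\Omega$ forces $e_1,e_2$ to be scalar multiples of $e$. $F=\{f_a\}$ is ideal if each $f_a$ equals $\sum_{i\in I_a}e_i$ or $u-\sum_{i\in I_a}e_i$ for a finite family of pure indecomposable effects $e_i$. $GL(\Omega)$: group of linear bijections $T$ of $V$ with $T(\Omega)=\Omega$, $\mu$ its normalized Haar measure, $\langle x,y\rangle_{GL(\Omega)}=\int(Tx,Ty)_E\,d\mu(T)$. $\Omega$ is transitive if $GL(\Omega)$ acts transitively on $\Omega^{\mathrm{ext}}$; $V_+$ is self-dual w.r.t. $\langle\cdot,\cdot\rangle_{GL(\Omega)}$ if $V_+=\{y:\langle x,y\rangle_{GL(\Omega)}\ge0\ \forall x\in V_+\}$. $\omega^F=\{f_a(\omega)\}_a$.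 $O_{d_A}(a;w)=\{x\in A:d_A(x,a)\le w/2\}$; overall width $W_\epsilon(\omega^F)=\inf\{w>0:\exists a,\ \sum_{a'\in O_{d_A}(a;w)}f_{a'}(\omega)\ge1-\epsilon\}$. Werner's measure: with $\Lambda=\{h:A\to\mathbb R:|h(a_1)-h(a_2)|\le d_A(a_1,a_2)\ \forall a_1,a_2\}$, $D_W(\widetilde F,F)=\sup_{\omega\in\Omega}\sup_{h\in\Lambda}\left|\sum_{a\in A}h(a)\widetilde f_a(\omega)-\sum_{a\in A}h(a)f_a(\omega)\right|$. *)

From HB Require Import structures.
From mathcomp Require Import all_boot all_order all_algebra.
From mathcomp Require Import all_classical all_reals all_analysis.
Set Implicit Arguments. Unset Strict Implicit. Unset Printing Implicit Defensive.
Import Order.TTheory GRing.Theory Num.Theory.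
Import numFieldNormedType.Exports.
Local Open Scope classical_set_scope.
Local Open Scope ring_scope.

Section GPT.
Variables (R : realType) (n : nat).
(* V = R^n (row vectors); the dual V^* is identified with row vectors via the
   Euclidean pairing, so an effect e evaluated at x is [dotE e x]. *)
Notation V := 'rV[R]_n.

Definition dotE (x y : V) : R := \sum_(i < n) x 0 i * y 0 i.

Definition convex_set (S : set V) : Prop :=
  forall x y t, S x -> S y -> 0 <= t <= 1 -> S (t *: x + (1 - t) *: y).

Definition spans (S : set V) : Prop :=
  forall v : V, exists k (w : 'I_k -> V) (c : 'I_k -> R),
    (forall i, S (w i)) /\ v = \sum_(i < k) c i *: w i.

Definition in_affine_hull (S : set V) (v : V) : Prop :=
  exists k (w : 'I_k -> V) (c : 'I_k -> R),
    (forall i, S (w i)) /\ \sum_(i < k) c i = 1 /\ v = \sum_(i < k) c i *: w i.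

Definition state_space (Om : set V) : Prop :=
  compact Om /\ convex_set Om /\ spans Om /\ ~ in_affine_hull Om 0.

Definition unit_effect (Om : set V) (u : V) : Prop :=
  forall w, Om w -> dotE u w = 1.

Definition effects (Om : set V) : set V :=
  [set e | forall w, Om w -> 0 <= dotE e w <= 1].

Definition extreme_point (S : set V) (x : V) : Prop :=
  S x /\ forall y z t, S y -> S z -> 0 < t < 1 -> x = t *: y + (1 - t) *: z ->
    y = x /\ z = x.

Definition pure_effect (Om : set V) (e : V) : Prop := extreme_point (effects Om) e.

Definition indecomposable (Om : set V) (e : V) : Prop :=
  effects Om e /\ e != 0 /\
  forall e1 e2, effects Om e1 -> effects Om e2 -> e = e1 + e2 ->
    (exists c : R, e1 = c *: e) /\ (exists c : R, e2 = c *: e).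

(* observable with finite outcome set X; the trivial observable {u}
   (one outcome) is excluded *)
Definition observable (Om : set V) (u : V) (X : finType) (e : X -> V) : Prop :=
  (forall x, effects Om (e x)) /\ \sum_(x : X) e x = u /\ (1 < #|X|)%N.

Definition ideal_observable (Om : set V) (u : V) (X : finType) (f : X -> V) : Prop :=
  observable Om u f /\
  forall a, exists k (e : 'I_k -> V) (I : {set 'I_k}),
    (forall i, pure_effect Om (e i) /\ indecomposable Om (e i)) /\
    (f a = \sum_(i in I) e i \/ f a = u - \sum_(i in I) e i).

Definition GLOm (Om : set V) : set 'M[R]_n :=
  [set T | T \in unitmx /\ [set x *m T | x in Om] = Om].

Definition transitive_ss (Om : set V) : Prop :=
  forall x y, extreme_point Om x -> extreme_point Om y ->
    exists T, GLOm Om T /\ x *m T = y.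

(* A normalized Haar integral on the compact group GL(Omega), given as a
   positive normalized left- and right-invariant linear functional on
   continuous real functions (Riesz representation of the Haar measure). *)
Definition haar_integral (Om : set V) (mu : ('M[R]_n -> R) -> R) : Prop :=
  (forall f g : 'M[R]_n -> R, continuous f -> continuous g ->
     mu (fun T => f T + g T) = mu f + mu g) /\
  (forall (c : R) (f : 'M[R]_n -> R), continuous f ->
     mu (fun T => c * f T) = c * mu f) /\
  (forall f : 'M[R]_n -> R, continuous f ->
     (forall T, GLOm Om T -> 0 <= f T) -> 0 <= mu f) /\
  mu (fun _ => 1) = 1 /\
  (forall (f : 'M[R]_n -> R) S, continuous f -> GLOm Om S ->
     mu (fun T => f (S *m T)) = mu f /\ mu (fun T => f (T *m S)) = mu f).

Definition inner_GL (mu : ('M[R]_n -> R) -> R) (x y : V) : R :=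
  mu (fun T => dotE (x *m T) (y *m T)).

Definition cone (Om : set V) : set V :=
  [set v | exists (l : R) w, 0 <= l /\ Om w /\ v = l *: w].

Definition self_dual_GL (Om : set V) : Prop :=
  exists mu, haar_integral Om mu /\
    cone Om = [set y | forall x, cone Om x -> 0 <= inner_GL mu x y].

Definition metric (A : finType) (d : A -> A -> R) : Prop :=
  (forall x y, 0 <= d x y) /\ (forall x y, d x y = 0 <-> x = y) /\
  (forall x y, d x y = d y x) /\ (forall x y z, d x z <= d x y + d y z).

Definition overall_width (A : finType) (d : A -> A -> R) (f : A -> V)
    (eps : R) (w : V) : R :=
  inf [set wd : R | 0 < wd /\ exists a : A,
         1 - eps <= \sum_(a' : A | d a' a <= wd / 2) dotE (f a') w].

Definition Lip1 (A : finType) (d : A -> A -> R) : set (A -> R) :=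
  [set h | forall a1 a2, `|h a1 - h a2| <= d a1 a2].

Definition werner_D (Om : set V) (A : finType) (d : A -> A -> R)
    (ft f : A -> V) : \bar R :=
  ereal_sup [set r : \bar R | exists (h : A -> R) (w : V),
     Lip1 d h /\ Om w /\
     r = (`| \sum_(a : A) h a * dotE (ft a) w
             - \sum_(a : A) h a * dotE (f a) w |)%:E].
End GPT.

(* The averaged inner product [inner_GL mu] is given by a Gram matrix; self-duality
   of the cone makes it positive definite, so every effect e has a Riesz
   representative ê with e(x) = <ê, x>, and ê lies in the cone.  Transitivity
   makes every pure state maximise <w, w> over the state space; consequently a
   pure indecomposable effect e has ê = l w for a state w with e(w) = 1, and for
   an ideal observable f_a(f̂_a) = u(f̂_a).
   Decompose m̂_p = l_p w_p with states w_p, so that sum_p l_p = u(û) > 0.  By the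
   symmetry f(ê) = e(f̂), testing Werner's measure against the 1-Lipschitz
   functions d(., a') on states where f_a' is certain gives
   sum_p l_p sum_a' d(a', p.1) f_a'(w_p) <= u(û) D_W(M^F, F), and likewise for G.
   A weighted-average argument then yields one p with l_p > 0 whose state w_p
   obeys both first-moment bounds, and Markov's inequality turns each of them
   into the width bound. *)

From HB Require Import structures.
From mathcomp Require Import all_boot all_order all_algebra.
From mathcomp Require Import all_classical all_reals all_analysis.
From mathcomp.algebra_tactics Require Import ring lra.
Set Implicit Arguments.
Unset Strict Implicit.
Unset Printing Implicit Defensive.
Import Order.TTheory GRing.Theory Num.Theory.
Import numFieldNormedType.Exports.
Local Open Scope classical_set_scope.
Local Open Scope ring_scope.

Section DotE.
Variables (R : realType) (n : nat).
Implicit Types x y z : 'rV[R]_n.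

Lemma dotEC x y : dotE x y = dotE y x.
Proof. by apply: eq_bigr => i _; rewrite mulrC. Qed.

Lemma dotEDl x y z : dotE (x + y) z = dotE x z + dotE y z.
Proof. by rewrite /dotE -big_split; apply: eq_bigr => i _; rewrite mxE mulrDl. Qed.

Lemma dotEZl (a : R) x z : dotE (a *: x) z = a * dotE x z.
Proof. by rewrite /dotE mulr_sumr; apply: eq_bigr => i _; rewrite mxE mulrA. Qed.

Lemma dotEDr x y z : dotE z (x + y) = dotE z x + dotE z y.
Proof. by rewrite dotEC dotEDl !(dotEC z). Qed.

Lemma dotEZr (a : R) x z : dotE z (a *: x) = a * dotE z x.
Proof. by rewrite dotEC dotEZl dotEC. Qed.

Lemma dotE0l z : dotE 0 z = 0.
Proof. by rewrite -(scale0r (0 : 'rV[R]_n)) dotEZl mul0r. Qed.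

Lemma dotENl x z : dotE (- x) z = - dotE x z.
Proof. by rewrite -scaleN1r dotEZl mulN1r. Qed.

Lemma dotEBl x y z : dotE (x - y) z = dotE x z - dotE y z.
Proof. by rewrite dotEDl dotENl. Qed.

Lemma dotE_suml (I : Type) (r : seq I) (P : pred I) (F : I -> 'rV[R]_n) z :
  dotE (\sum_(i <- r | P i) F i) z = \sum_(i <- r | P i) dotE (F i) z.
Proof. by elim/big_rec2: _ => [|i y1 y2 _ <-]; rewrite ?dotE0l ?dotEDl. Qed.

Lemma dotE_sumr (I : Type) (r : seq I) (P : pred I) (F : I -> 'rV[R]_n) z :
  dotE z (\sum_(i <- r | P i) F i) = \sum_(i <- r | P i) dotE z (F i).
Proof. by rewrite dotEC dotE_suml; apply: eq_bigr => i _; rewrite dotEC. Qed.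

Lemma dotEE_ge0 x : 0 <= dotE x x.
Proof. by apply: sumr_ge0 => i _; rewrite -expr2 sqr_ge0. Qed.

Lemma sum_dotE_decomp (I J : finType) (c : I -> J -> R) (f : I -> 'rV[R]_n)
    (v w : J -> 'rV[R]_n) (l : J -> R) : (forall p, v p = l p *: w p) ->
  \sum_p \sum_i c i p * dotE (f i) (v p) =
  \sum_p l p * \sum_i c i p * dotE (f i) (w p).
Proof.
move=> v_eq; apply: eq_bigr => p _; rewrite mulr_sumr; apply: eq_bigr => i _.
by rewrite v_eq dotEZr mulrCA.
Qed.

End DotE.

Section Continuity.
Variable R : realType.

Lemma continuous_sum (T : topologicalType) (I : Type) (r : seq I)
    (F : I -> T -> R) :
  (forall i, continuous (F i)) -> continuous (fun t => \sum_(i <- r) F i t).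
Proof. by move=> F_cont; apply: (continuous_big add_continuous) => i _. Qed.

Lemma continuous_mulmx_coord (T : topologicalType) m n p
    (P : T -> 'M[R]_(m, n)) (Q : T -> 'M[R]_(n, p)) :
  (forall i j, continuous (fun t => P t i j)) ->
  (forall i j, continuous (fun t => Q t i j)) ->
  forall i j, continuous (fun t => (P t *m Q t) i j).
Proof.
move=> P_cont Q_cont i j.
have -> : (fun t => (P t *m Q t) i j) =
          (fun t => \sum_(k <- index_enum 'I_n) P t i k * Q t k j).
  by apply: funext => t; rewrite mxE.
by apply: continuous_sum => k t; exact: (continuousM (P_cont i k t) (Q_cont k j t)).
Qed.

Lemma continuous_dotE (T : topologicalType) n (p q : T -> 'rV[R]_n) :
  (forall i j, continuous (fun t => p t i j)) ->
  (forall i j, continuous (fun t => q t i j)) ->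
  continuous (fun t => dotE (p t) (q t)).
Proof.
by move=> p_cont q_cont; apply: continuous_sum => k t;
  exact: (continuousM (p_cont 0 k t) (q_cont 0 k t)).
Qed.

Lemma continuous_dotE_mulmx n (x y : 'rV[R]_n) :
  continuous (fun T : 'M[R]_n => dotE (x *m T) (y *m T)).
Proof.
have xT_cont (z : 'rV[R]_n) i j : continuous (fun T : 'M[R]_n => (z *m T) i j).
  by apply: continuous_mulmx_coord => k l;
    [exact: cst_continuous | exact: coord_continuous].
exact: continuous_dotE.
Qed.

Lemma continuous_quadratic_form n (G : 'M[R]_n) :
  continuous (fun x : 'rV[R]_n => dotE (x *m G) x).
Proof.
apply: continuous_dotE => [|i j]; last exact: coord_continuous.
by apply: continuous_mulmx_coord => i j;
  [exact: coord_continuous | exact: cst_continuous].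
Qed.

End Continuity.

Section Markov.
Variables (R : realType) (A : finType).

Lemma markov_tail (q dd : A -> R) (r : R) :
  (forall a, 0 <= q a) -> (forall a, 0 <= dd a) ->
  r * \sum_(a | r < dd a) q a <= \sum_a dd a * q a.
Proof.
move=> q_ge0 dd_ge0; rewrite mulr_sumr [leRHS](bigID (fun a => r < dd a)) /=.
apply: ler_wpDr; first by apply: sumr_ge0 => a _; rewrite mulr_ge0.
by apply: ler_sum => a /ltW r_le; rewrite ler_wpM2r.
Qed.

Variables (n : nat) (d : A -> A -> R) (f : A -> 'rV[R]_n) (w : 'rV[R]_n).

Lemma overall_width_le (e z : R) : 0 < z ->
  (exists a, 1 - e <= \sum_(a' | d a' a <= z / 2) dotE (f a') w) ->
  overall_width d f e w <= z.
Proof.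
move=> z_gt0 [a mass_a]; apply: ge_inf; last by split=> //; exists a.
by exists 0 => y [/ltW].
Qed.

Lemma overall_width_le_markov (a : A) (D e1 e : R) :
  (forall a', 0 <= d a' a) -> (forall a', 0 <= dotE (f a') w) ->
  \sum_a' dotE (f a') w = 1 -> 0 <= D -> 0 < e1 -> 0 <= e ->
  e1 * \sum_a' d a' a * dotE (f a') w <= e * D ->
  e1 / 2 * overall_width d f e w <= D.
Proof.
move=> d_ge0 q_ge0 q_sum1 D_ge0 e1_gt0 e_ge0 first_moment.
suff W_le : overall_width d f e w <= 2 * D / e1.
  have -> : D = e1 / 2 * (2 * D / e1) by field; rewrite gt_eqF.
  by rewrite ler_wpM2l // divr_ge0 // ltW.
apply/unstable.ler_gtP => z; rewrite ltr_pdivrMr // => Dz.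
have r_gt0 : 0 < z / 2 by rewrite divr_gt0 //; nra.
apply: overall_width_le; first by nra.
exists a; set r := z / 2.
have tail_le : \sum_(a' | r < d a' a) dotE (f a') w <= e.
  rewrite -(ler_pM2l (mulr_gt0 e1_gt0 r_gt0)) -mulrA.
  apply: le_trans (ler_wpM2l (ltW e1_gt0) (markov_tail r q_ge0 d_ge0)) _.
  apply: le_trans first_moment _.
  have D_le : D <= e1 * r by rewrite /r; lra.
  by rewrite [e1 * r * e]mulrC ler_wpM2l.
move: q_sum1; rewrite (bigID (fun a' => d a' a <= r)) /=.
under [X in _ + X = _ -> _]eq_bigl => a' do rewrite -ltNge.
lra.
Qed.

End Markov.

Section WeightedAverage.
Variables (R : realType) (P : finType) (l : P -> R).
Hypotheses (l_ge0 : forall p, 0 <= l p) (l_sum_gt0 : 0 < \sum_p l p).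

Lemma exists_weight_gt0 : exists p, 0 < l p.
Proof.
have := psumr_neq0 (index_enum P) (fun p (_ : true) => l_ge0 p).
by rewrite gt_eqF // => /esym/hasP[p _ /andP[_ lp_gt0]]; exists p.
Qed.

Lemma exists_weighted_le0 (phi : P -> R) : \sum_p l p * phi p <= 0 ->
  exists p, 0 < l p /\ phi p <= 0.
Proof.
move=> avg_le0; apply: contrapT => no_p.
have phi_gt0 p : 0 < l p -> 0 < phi p.
  by move=> lp_gt0; rewrite ltNge; apply/negP => phi_le0; apply: no_p; exists p.
have [p0 lp0_gt0] := exists_weight_gt0.
suff : 0 < \sum_p l p * phi p by rewrite ltNge avg_le0.
rewrite (bigD1 p0) //= ltr_wpDr ?mulr_gt0 ?phi_gt0 //.
apply: sumr_ge0 => p _; have [lp_eq0|lp_neq0] := eqVneq (l p) 0.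
  by rewrite lp_eq0 mul0r.
have lp_gt0 : 0 < l p by rewrite lt_neqAle eq_sym lp_neq0 l_ge0.
by rewrite mulr_ge0 // ltW ?phi_gt0.
Qed.

Lemma weighted_sum_le0_eq0 (x : P -> R) : (forall p, 0 <= x p) ->
  \sum_p l p * x p <= 0 -> forall p, 0 < l p -> x p = 0.
Proof.
move=> x_ge0 sum_le0 p lp_gt0.
have terms_ge0 p' : 0 <= l p' * x p' by rewrite mulr_ge0.
have sum_eq0 : \sum_p l p * x p = 0 by apply/eqP; rewrite eq_le sum_le0 sumr_ge0.
have /eqP := psumr_eq0P (fun p' _ => terms_ge0 p') sum_eq0 (i := p) isT.
by rewrite mulf_eq0 gt_eqF //= => /eqP.
Qed.

Lemma exists_weight_both_bounds_pos (x y : P -> R) (DF DG e1 e2 : R) :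
  (forall p, 0 <= x p) -> (forall p, 0 <= y p) ->
  0 < DF -> 0 < DG -> 0 < e1 -> 0 < e2 ->
  \sum_p l p * x p <= (\sum_p l p) * DF ->
  \sum_p l p * y p <= (\sum_p l p) * DG ->
  exists p, 0 < l p /\ e1 * x p <= (e1 + e2) * DF /\
                       e2 * y p <= (e1 + e2) * DG.
Proof.
move=> x_ge0 y_ge0 DF_gt0 DG_gt0 e1_gt0 e2_gt0 avg_x avg_y.
pose phi p := e1 * (x p / DF) + e2 * (y p / DG) - (e1 + e2).
have [|p [lp_gt0 phi_le0]] := exists_weighted_le0 (phi := phi).
  have -> : \sum_p l p * phi p = e1 * ((\sum_p l p * x p) / DF) +
      e2 * ((\sum_p l p * y p) / DG) - (e1 + e2) * \sum_p l p.
    rewrite !mulr_suml !mulr_sumr -big_split -sumrB /=.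
    by apply: eq_bigr => p _; rewrite /phi; ring.
  rewrite -!(ler_pdivrMr _ _ DF_gt0, ler_pdivrMr _ _ DG_gt0) in avg_x avg_y.
  have := ler_wpM2l (ltW e1_gt0) avg_x; have := ler_wpM2l (ltW e2_gt0) avg_y.
  lra.
have x_term : 0 <= e1 * (x p / DF) by rewrite mulr_ge0 ?divr_ge0 // ltW.
have y_term : 0 <= e2 * (y p / DG) by rewrite mulr_ge0 ?divr_ge0 // ltW.
move: phi_le0; rewrite /phi => phi_le0.
by exists p; split=> //; split; rewrite -ler_pdivrMr //; lra.
Qed.

Lemma exists_weight_both_bounds (x y : P -> R) (DF DG e1 e2 : R) :
  (forall p, 0 <= x p) -> (forall p, 0 <= y p) ->
  0 <= DF -> 0 <= DG -> 0 < e1 -> 0 < e2 ->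
  \sum_p l p * x p <= (\sum_p l p) * DF ->
  \sum_p l p * y p <= (\sum_p l p) * DG ->
  exists p, 0 < l p /\ e1 * x p <= (e1 + e2) * DF /\
                       e2 * y p <= (e1 + e2) * DG.
Proof.
move=> x_ge0 y_ge0 DF_ge0 DG_ge0 e1_gt0 e2_gt0 avg_x avg_y.
(* If [D = 0], the average bound forces [z p = 0] wherever [l p > 0],
   so [D] may be replaced by [1]. *)
pose nz (D : R) : R := if D == 0 then 1 else D.
have nz_gt0 D : 0 <= D -> 0 < nz D.
  by rewrite /nz le_eqVlt; case: eqVneq => //= _; rewrite ltr01.
have avg_nz z D : 0 <= D -> \sum_p l p * z p <= (\sum_p l p) * D ->
    \sum_p l p * z p <= (\sum_p l p) * nz D.
  rewrite /nz; case: eqVneq => // -> _; rewrite mulr0 mulr1 => avg_le0.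
  exact: le_trans avg_le0 (ltW l_sum_gt0).
have nz_bound z D c p : (forall p, 0 <= z p) ->
    \sum_p l p * z p <= (\sum_p l p) * D -> 0 < l p ->
    c * z p <= (e1 + e2) * nz D -> c * z p <= (e1 + e2) * D.
  rewrite /nz; case: eqVneq => // -> z_ge0; rewrite mulr0 => avg_le0 lp_gt0 _.
  by rewrite (weighted_sum_le0_eq0 z_ge0 avg_le0 lp_gt0) !mulr0.
have [p [lp_gt0 [x_le y_le]]] := exists_weight_both_bounds_pos
  x_ge0 y_ge0 (nz_gt0 _ DF_ge0) (nz_gt0 _ DG_ge0) e1_gt0 e2_gt0
  (avg_nz _ _ DF_ge0 avg_x) (avg_nz _ _ DG_ge0 avg_y).
by exists p; split=> //; split; [apply: nz_bound x_le | apply: nz_bound y_le].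
Qed.

End WeightedAverage.

Section Effects.
Variables (R : realType) (n : nat) (Om : set 'rV[R]_n) (u : 'rV[R]_n).
Implicit Types (e v w y : 'rV[R]_n).

Lemma effects_summands e e1 e2 : effects Om e -> e = e1 + e2 ->
  (forall x, Om x -> 0 <= dotE e1 x) -> (forall x, Om x -> 0 <= dotE e2 x) ->
  effects Om e1 /\ effects Om e2.
Proof.
move=> e_eff e_eq e1_ge0 e2_ge0.
have bounds x : Om x ->
    [/\ 0 <= dotE e1 x, 0 <= dotE e2 x & dotE e1 x + dotE e2 x <= 1].
  move=> x_Om; have /andP[_] := e_eff x x_Om; rewrite e_eq dotEDl.
  by split; [exact: e1_ge0 | exact: e2_ge0 |].
by split=> x /bounds[e1x_ge0 e2x_ge0 sum_le1]; apply/andP; split=> //; lra.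
Qed.

Lemma pure_effect_bound_ge1 e (t : R) : pure_effect Om e -> e != 0 -> 0 < t ->
  (forall x, Om x -> dotE e x <= t) -> 1 <= t.
Proof.
move=> [e_eff e_extreme] e_neq0 t_gt0 e_le_t; rewrite leNgt; apply/negP => t_lt1.
have et_eff : effects Om (t^-1 *: e).
  move=> x x_Om; have /andP[ex_ge0 _] := e_eff x x_Om.
  rewrite dotEZl ler_pdivrMl // mulr1 e_le_t // andbT.
  by rewrite mulr_ge0 // invr_ge0 ltW.
have zero_eff : effects Om 0 by move=> x _; rewrite dotE0l lexx ler01.
have e_conv : e = t *: (t^-1 *: e) + (1 - t) *: 0.
  by rewrite scaler0 addr0 scalerA mulfV ?gt_eqF // scale1r.
have [_ e_eq0] := e_extreme _ _ t et_eff zero_eff (ltac:(by rewrite t_gt0)) e_conv.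
by move: e_neq0; rewrite -e_eq0 eqxx.
Qed.

Lemma scaled_states_eq y w (a b : R) : unit_effect Om u ->
  Om y -> Om w -> 0 < a -> a *: y = b *: w -> y = w.
Proof.
move=> u_unit y_Om w_Om a_gt0 ay_eq.
have := congr1 (dotE u) ay_eq; rewrite !dotEZr !u_unit // !mulr1 => ab_eq.
apply: (scalerI (a := a)); first by rewrite gt_eqF.
by rewrite ay_eq ab_eq.
Qed.

End Effects.

Section Marginal.
Variables (R : realType) (n : nat) (J A : finType) (pi : J -> A).
Variable m : J -> 'rV[R]_n.

Definition marginal : A -> 'rV[R]_n := fun a => \sum_(p | pi p == a) m p.

Lemma sum_marginal (phi : A -> R) v :
  \sum_a phi a * dotE (marginal a) v = \sum_p phi (pi p) * dotE (m p) v.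
Proof.
rewrite [RHS](partition_big pi xpredT) //=; apply: eq_bigr => a _.
by rewrite dotE_suml mulr_sumr; apply: eq_bigr => p /eqP ->.
Qed.

End Marginal.

Lemma marginal_fst (R : realType) n (A B : finType) (m : A * B -> 'rV[R]_n) a :
  marginal fst m a = \sum_b m (a, b).
Proof.
transitivity (\sum_(a' | a' == a) \sum_b m (a', b)); last by rewrite big_pred1_eq.
rewrite pair_big_dep; apply: eq_big => [[a' b]|[a' b] _] //=; by rewrite andbT.
Qed.

Lemma marginal_snd (R : realType) n (A B : finType) (m : A * B -> 'rV[R]_n) b :
  marginal snd m b = \sum_a m (a, b).
Proof.
transitivity (\sum_a \sum_(b' | b' == b) m (a, b')); last first.
  by apply: eq_bigr => a _; rewrite big_pred1_eq.
rewrite pair_big_dep; apply: eq_big => [[a b']|[a b'] _] //=.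
Qed.

Section Werner.
Variables (R : realType) (n : nat) (Om : set 'rV[R]_n) (A : finType).
Variables (d : A -> A -> R) (ft f : A -> 'rV[R]_n).

Lemma Lip1_dist (a0 : A) : metric d -> Lip1 d (fun a => d a a0).
Proof.
move=> [_ [_ [d_sym d_tri]]] a1 a2; rewrite ler_norml.
by have := d_tri a1 a2 a0; have := d_tri a2 a1 a0; rewrite (d_sym a2 a1); lra.
Qed.

Lemma werner_D_ge0 : metric d -> Om !=set0 -> (0%:E <= werner_D Om d ft f)%E.
Proof.
move=> [d_ge0 _] [w w_Om]; apply: ereal_sup_ubound.
exists (fun=> 0), w; split; first by move=> a1 a2; rewrite subrr normr0.
by split=> //; rewrite !big1 ?subrr ?normr0 // => a _; rewrite mul0r.
Qed.

Lemma werner_D_ge_dist (u w : 'rV[R]_n) (a' : A) :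
  metric d -> (forall a, effects Om (f a)) -> \sum_a f a = u ->
  unit_effect Om u -> Om w -> dotE (f a') w = 1 ->
  ((\sum_a d a a' * dotE (ft a) w)%:E <= werner_D Om d ft f)%E.
Proof.
move=> d_metric f_eff f_sum u_unit w_Om fa'_w.
have f_off : forall a, a != a' -> dotE (f a) w = 0.
  have : \sum_a dotE (f a) w = 1 by rewrite -dotE_suml f_sum u_unit.
  rewrite (bigD1 a') //= fa'_w => sum1.
  apply: psumr_eq0P => [a _|]; first by case/andP: (f_eff a w w_Om).
  lra.
have f_dist0 : \sum_a d a a' * dotE (f a) w = 0.
  apply: big1 => a _; have [->|a_neq] := eqVneq a a'.
    by rewrite (d_metric.2.1 a' a').2 ?mul0r.
  by rewrite f_off ?mulr0.
apply: le_trans (ereal_sup_ubound _); last first.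
  by exists (fun a => d a a'), w; split; [exact: Lip1_dist | split].
by rewrite lee_fin f_dist0 subr0 ler_norm.
Qed.

Lemma dist_moment_ge0 (w : 'rV[R]_n) (a : A) :
  metric d -> (forall a, effects Om (f a)) -> Om w ->
  0 <= \sum_a' d a' a * dotE (f a') w.
Proof.
move=> [d_ge0 _] f_eff w_Om; apply: sumr_ge0 => a' _.
by rewrite mulr_ge0 //; case/andP: (f_eff a' w w_Om).
Qed.

Lemma overall_width_le_werner (u w : 'rV[R]_n) (a : A) (D e1 e : R) :
  metric d -> (forall a, effects Om (f a)) -> \sum_a f a = u ->
  unit_effect Om u -> Om w -> 0 <= D -> (D%:E <= werner_D Om d ft f)%E ->
  0 < e1 -> 0 <= e -> e1 * \sum_a' d a' a * dotE (f a') w <= e * D ->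
  ((e1 / 2 * overall_width d f e w)%:E <= werner_D Om d ft f)%E.
Proof.
move=> [d_ge0 _] f_eff f_sum u_unit w_Om D_ge0 D_le e1_gt0 e_ge0 moment_le.
apply: le_trans D_le; rewrite lee_fin.
apply: overall_width_le_markov D_ge0 e1_gt0 e_ge0 moment_le => // [a'|].
  by case/andP: (f_eff a' w w_Om).
by rewrite -dotE_suml f_sum u_unit.
Qed.

End Werner.

(* For [n = 0] the empty set is a state space, hence the [N.+1]. *)
Lemma state_space_neq0 (R : realType) (N : nat) (Om : set 'rV[R]_N.+1) :
  state_space Om -> Om !=set0.
Proof.
move=> [_ [_ [Om_span _]]]; have [k [w [c [w_Om one_eq]]]] := Om_span (const_mx 1).
case: k w c w_Om one_eq => [|k] w c w_Om one_eq; last by exists (w ord0).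
have := congr1 (fun v : 'rV[R]_N.+1 => v 0 0) one_eq.
by rewrite big_ord0 !mxE => /eqP; rewrite oner_eq0.
Qed.


Section SelfDualCone.
Variables (R : realType) (n : nat) (Om : set 'rV[R]_n) (u : 'rV[R]_n).
Variable mu : ('M[R]_n -> R) -> R.
Hypotheses (Om_ss : state_space Om) (u_unit : unit_effect Om u).
Hypotheses (mu_haar : haar_integral Om mu)
  (cone_self_dual : cone Om = [set y | forall x, cone Om x -> 0 <= inner_GL mu x y]).

Local Notation ip := (inner_GL mu).
Implicit Types (x y z e v w : 'rV[R]_n).

Lemma haar_sum (I : Type) (r : seq I) (F : I -> 'M[R]_n -> R) :
  (forall i, continuous (F i)) ->
  mu (fun T => \sum_(i <- r) F i T) = \sum_(i <- r) mu (F i).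
Proof.
have [mu_add [mu_scale _]] := mu_haar; move=> F_cont.
elim: r => [|i r IH].
  have -> : (fun T => \sum_(i <- [::]) F i T) = (fun T => 0 * 1).
    by apply: funext => T; rewrite big_nil mul0r.
  by rewrite mu_scale ?big_nil ?mul0r //; exact: cst_continuous.
have -> : (fun T => \sum_(j <- i :: r) F j T) =
          (fun T => F i T + \sum_(j <- r) F j T).
  by apply: funext => T; rewrite big_cons.
by rewrite mu_add ?big_cons ?IH //; exact: continuous_sum.
Qed.

Definition gram : 'M[R]_n := \matrix_(i, j) ip (delta_mx 0 i) (delta_mx 0 j).

Lemma inner_GL_gram x y : ip x y = dotE (x *m gram) y.
Proof.
have [_ [mu_scale _]] := mu_haar.
have cst_dotE_cont (c : R) (x' y' : 'rV[R]_n) :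
    continuous (fun T : 'M[R]_n => c * dotE (x' *m T) (y' *m T)).
  by move=> T; exact: (continuousM (@cst_continuous _ _ c T)
                              (@continuous_dotE_mulmx _ _ x' y' T)).
have expand (T : 'M[R]_n) : dotE (x *m T) (y *m T) = \sum_(i < n) \sum_(j < n)
    x 0 i * y 0 j * dotE (delta_mx 0 i *m T) (delta_mx 0 j *m T).
  rewrite {1}(row_sum_delta x) {1}(row_sum_delta y) !mulmx_suml dotE_suml.
  apply: eq_bigr => i _; rewrite dotE_sumr; apply: eq_bigr => j _.
  by rewrite -!scalemxAl dotEZl dotEZr mulrA.
rewrite /inner_GL (funext expand) haar_sum; last first.
  by move=> i; apply: continuous_sum => j; exact: cst_dotE_cont.
rewrite [dotE (x *m gram) y]/dotE; under [RHS]eq_bigr => k _ do rewrite mxE mulr_suml.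
rewrite [RHS]exchange_big /=; apply: eq_bigr => i _.
rewrite haar_sum; last by move=> j; exact: cst_dotE_cont.
apply: eq_bigr => j _.
rewrite mu_scale ?mxE; first by rewrite mulrAC.
exact: continuous_dotE_mulmx.
Qed.

Lemma inner_GLC x y : ip x y = ip y x.
Proof. by congr mu; apply: funext => T; rewrite dotEC. Qed.

Lemma inner_GLNl x y : ip (- x) y = - ip x y.
Proof. by rewrite !inner_GL_gram mulNmx dotENl. Qed.

Lemma inner_GL_sqr_lincomb (a b : R) x y :
  ip (a *: x + b *: y) (a *: x + b *: y) =
  a ^+ 2 * ip x x + 2 * a * b * ip x y + b ^+ 2 * ip y y.
Proof.
rewrite [ip y y]inner_GL_gram [ip x x]inner_GL_gram inner_GL_gram mulmxDl.
rewrite -!scalemxAl !dotEDl !dotEDr !dotEZl !dotEZr.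
by rewrite -!inner_GL_gram [ip y x]inner_GLC; ring.
Qed.

Lemma inner_GL_ge0 x : 0 <= ip x x.
Proof.
have [_ [_ [mu_ge0 _]]] := mu_haar.
by apply: mu_ge0 => [|T _]; [exact: continuous_dotE_mulmx | exact: dotEE_ge0].
Qed.

Lemma inner_GL_invariant S x : GLOm Om S -> ip (x *m S) (x *m S) = ip x x.
Proof.
have [_ [_ [_ [_ mu_inv]]]] := mu_haar; move=> S_GL.
rewrite /inner_GL -(mu_inv (fun T => dotE (x *m T) (x *m T)) S _ S_GL).1;
  last exact: continuous_dotE_mulmx.
by congr mu; apply: funext => T; rewrite !mulmxA.
Qed.

Lemma cone_dualP y : cone Om y <-> forall x, cone Om x -> 0 <= ip x y.
Proof. by rewrite {1}cone_self_dual. Qed.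

Lemma state_in_cone w : Om w -> cone Om w.
Proof. by move=> w_Om; exists 1, w; rewrite scale1r ler01. Qed.

Lemma inner_GL_states_ge0 v w : Om v -> Om w -> 0 <= ip v w.
Proof. by move=> v_Om w_Om; apply/(cone_dualP w).1; apply: state_in_cone. Qed.

Lemma state_neq0 : ~ Om 0.
Proof.
have [_ [_ [_ not_aff0]]] := Om_ss; move=> Om0; apply: not_aff0.
exists 1%N, (fun=> 0), (fun=> 1); split=> //.
by rewrite !big_ord1 scale1r.
Qed.

Lemma cone_pointed z : cone Om z -> cone Om (- z) -> z = 0.
Proof.
move=> [l [w [l_ge0 [w_Om ->]]]] [l' [w' [l'_ge0 [w'_Om lw'_eq]]]].
have [->|l_neq0] := eqVneq l 0; first by rewrite scale0r.
have [l'_eq0|l'_neq0] := eqVneq l' 0.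
  by apply/eqP; rewrite -oppr_eq0 lw'_eq l'_eq0 scale0r.
have ll'_gt0 : 0 < l + l' by rewrite ltr_wpDr // lt_neqAle eq_sym l_neq0.
have [_ [Om_convex _]] := Om_ss.
have t_01 : 0 <= l / (l + l') <= 1.
  by rewrite divr_ge0 ?ler_pdivrMr //= ?mul1r ?lerDl // ltW.
have := Om_convex w w' _ w_Om w'_Om t_01.
have -> : 1 - l / (l + l') = l' / (l + l') by field; rewrite gt_eqF.
have -> : l / (l + l') *: w + l' / (l + l') *: w' =
          (l + l')^-1 *: (l *: w + l' *: w').
  by rewrite scalerDr !scalerA ![(l + l')^-1 * _]mulrC.
by rewrite -lw'_eq subrr scaler0 => /state_neq0.
Qed.

Lemma inner_GL_nondegenerate z : (forall x, ip z x = 0) -> z = 0.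
Proof.
move=> z_orth; apply: cone_pointed; apply/cone_dualP => x _.
  by rewrite inner_GLC z_orth.
by rewrite inner_GLC inner_GLNl z_orth oppr0.
Qed.

Lemma inner_GL_eq0 x : ip x x = 0 -> x = 0.
Proof.
move=> xx_eq0; apply: inner_GL_nondegenerate => y.
have [//|xy_neq0] := eqVneq (ip x y) 0.
(* [t |-> ip (t x + y) (t x + y)] is affine and nonnegative, so its slope
   [2 ip x y] vanishes. *)
pose t := - (ip y y + 1) / (2 * ip x y).
have := inner_GL_ge0 (t *: x + 1 *: y).
rewrite inner_GL_sqr_lincomb xx_eq0.
have -> : 2 * t * 1 * ip x y = - (ip y y + 1) by rewrite /t; field.
by rewrite expr1n mul1r; lra.
Qed.

Lemma gram_unit : gram \in unitmx.
Proof.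
rewrite -row_free_unit -kermx_eq0; apply/eqP/row_matrixP => i.
rewrite row0; apply: inner_GL_nondegenerate => x.
by rewrite inner_GL_gram -row_mul mulmx_ker row0 dotE0l.
Qed.

Definition riesz e : 'rV[R]_n := e *m invmx gram.

Lemma mulmx_riesz e : riesz e *m gram = e.
Proof. exact: (mulmxKV gram_unit). Qed.

Lemma riesz_mulmx v : riesz (v *m gram) = v.
Proof. exact: (mulmxK gram_unit). Qed.

Lemma riesz_sum (I : Type) (r : seq I) (P : pred I) (F : I -> 'rV[R]_n) :
  riesz (\sum_(i <- r | P i) F i) = \sum_(i <- r | P i) riesz (F i).
Proof. exact: mulmx_suml. Qed.

Lemma inner_GL_riesz e x : ip (riesz e) x = dotE e x.
Proof. by rewrite inner_GL_gram mulmx_riesz. Qed.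

Lemma dotE_riesz_sym x y : dotE x (riesz y) = dotE y (riesz x).
Proof. by rewrite -inner_GL_riesz inner_GLC inner_GL_riesz. Qed.

Lemma effect_riesz_cone e : effects Om e -> cone Om (riesz e).
Proof.
move=> e_eff; apply/cone_dualP => _ [l [w [l_ge0 [w_Om ->]]]].
by rewrite inner_GLC inner_GL_riesz dotEZr mulr_ge0 //; case/andP: (e_eff w w_Om).
Qed.

Lemma effect_riesz_decomp e : effects Om e ->
  exists l w, [/\ 0 <= l, Om w, riesz e = l *: w & dotE u (riesz e) = l].
Proof.
move=> /effect_riesz_cone [l [w [l_ge0 [w_Om e_eq]]]].
by exists l, w; rewrite e_eq dotEZr u_unit // mulr1.
Qed.

Hypothesis Om_neq0 : Om !=set0.

Lemma unit_riesz_gt0 : 0 < dotE u (riesz u).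
Proof.
rewrite -inner_GL_riesz lt_neqAle inner_GL_ge0 andbT eq_sym.
apply/eqP => /inner_GL_eq0 riesz_u0; have [w w_Om] := Om_neq0.
have := u_unit w_Om.
by rewrite -(mulmx_riesz u) riesz_u0 mul0mx dotE0l => /eqP; rewrite eq_sym oner_eq0.
Qed.

Lemma exists_inner_GL_max : exists2 x0, Om x0 & forall y, Om y -> ip y y <= ip x0 x0.
Proof.
have ip_cont : {within Om, continuous (fun x => ip x x)}.
  apply: continuous_subspaceT; rewrite (funext (fun x => inner_GL_gram x x)).
  exact: continuous_quadratic_form.
have [x0 /[!in_setE] x0_Om x0_max] := EVT_max_rV Om_neq0 Om_ss.1 ip_cont.
by exists x0 => // y y_Om; apply: x0_max; rewrite in_setE.
Qed.

Lemma inner_GL_sqr_conv (t : R) y z :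
  ip (t *: y + (1 - t) *: z) (t *: y + (1 - t) *: z) =
  t * ip y y + (1 - t) * ip z z - t * (1 - t) * ip (y - z) (y - z).
Proof.
have -> : y - z = 1 *: y + (-1) *: z by rewrite scale1r scaleN1r.
by rewrite !inner_GL_sqr_lincomb; ring.
Qed.

Lemma inner_GL_argmax_extreme x0 : Om x0 ->
  (forall y, Om y -> ip y y <= ip x0 x0) -> extreme_point Om x0.
Proof.
move=> x0_Om x0_max; split=> // y z t y_Om z_Om /andP[t_gt0 t_lt1] x0_eq.
have t1_gt0 : 0 < 1 - t by rewrite subr_gt0.
have t1t_gt0 : 0 < t * (1 - t) by rewrite mulr_gt0.
have yz_le0 : t * (1 - t) * ip (y - z) (y - z) <= 0.
  have := inner_GL_sqr_conv t y z; rewrite -x0_eq.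
  have := ler_wpM2l (ltW t_gt0) (x0_max y y_Om).
  have := ler_wpM2l (ltW t1_gt0) (x0_max z z_Om).
  lra.
have /inner_GL_eq0 /eqP : ip (y - z) (y - z) = 0.
  by apply/eqP; rewrite eq_le inner_GL_ge0 andbT -(pmulr_rle0 _ t1t_gt0).
rewrite subr_eq0 => /eqP z_eq; rewrite -z_eq in x0_eq *.
by rewrite x0_eq -scalerDl subrKC scale1r.
Qed.

Hypothesis Om_transitive : transitive_ss Om.

Lemma extreme_inner_GL_max w y : extreme_point Om w -> Om y -> ip y y <= ip w w.
Proof.
move=> w_ext y_Om; have [x0 x0_Om x0_max] := exists_inner_GL_max.
have [T [T_GL <-]] :=
  Om_transitive (inner_GL_argmax_extreme x0_Om x0_max) w_ext.
by rewrite inner_GL_invariant //; apply: x0_max.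
Qed.

Lemma extreme_inner_GL_le w x : extreme_point Om w -> Om x -> ip w x <= ip w w.
Proof.
move=> w_ext x_Om; have := inner_GL_ge0 (1 *: w + (-1) *: x).
rewrite inner_GL_sqr_lincomb; have := extreme_inner_GL_max w_ext x_Om; lra.
Qed.

Lemma riesz_scale (c : R) e : riesz (c *: e) = c *: riesz e.
Proof. by rewrite /riesz -scalemxAl. Qed.

Lemma indecomposable_riesz_extreme e l w : indecomposable Om e ->
  0 < l -> Om w -> riesz e = l *: w -> extreme_point Om w.
Proof.
move=> [e_eff [_ e_indec]] l_gt0 w_Om e_eq.
split=> // y z s y_Om z_Om /andP[s_gt0 s_lt1] w_eq.
pose part (c : R) v := c *: (v *m gram).
have part_ge0 c v : 0 <= c -> Om v -> forall x, Om x -> 0 <= dotE (part c v) x.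
  move=> c_ge0 v_Om x x_Om; rewrite dotEZl -inner_GL_gram mulr_ge0 //.
  exact: inner_GL_states_ge0.
have e_sum : e = part (l * s) y + part (l * (1 - s)) z.
  by rewrite -(mulmx_riesz e) e_eq w_eq scalerDr !scalerA mulmxDl -!scalemxAl.
have s1_gt0 : 0 < 1 - s by rewrite subr_gt0.
have [y_eff z_eff] := effects_summands e_eff e_sum
  (part_ge0 _ _ (mulr_ge0 (ltW l_gt0) (ltW s_gt0)) y_Om)
  (part_ge0 _ _ (mulr_ge0 (ltW l_gt0) (ltW s1_gt0)) z_Om).
have [[c1 y_part] [c2 z_part]] := e_indec _ _ y_eff z_eff e_sum.
have riesz_part c v c' : part c v = c' *: e -> c *: v = (c' * l) *: w.
  by move=> /(congr1 riesz); rewrite !riesz_scale riesz_mulmx e_eq scalerA.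
split.
  exact: scaled_states_eq u_unit y_Om w_Om (mulr_gt0 l_gt0 s_gt0)
    (riesz_part _ _ _ y_part).
exact: scaled_states_eq u_unit z_Om w_Om (mulr_gt0 l_gt0 s1_gt0)
  (riesz_part _ _ _ z_part).
Qed.

Lemma pure_indecomposable_riesz e : pure_effect Om e -> indecomposable Om e ->
  exists l w, [/\ 0 < l, Om w, riesz e = l *: w & dotE e w = 1].
Proof.
move=> e_pure e_indec; have [e_eff [e_neq0 _]] := e_indec.
have [l [w [l_ge0 w_Om e_eq _]]] := effect_riesz_decomp e_eff.
have l_gt0 : 0 < l.
  rewrite lt_neqAle l_ge0 andbT eq_sym; apply: contra e_neq0 => /eqP l_eq0.
  by rewrite -(mulmx_riesz e) e_eq l_eq0 scale0r mul0mx.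
have w_ext := indecomposable_riesz_extreme e_indec l_gt0 w_Om e_eq.
have e_val x : dotE e x = l * ip w x.
  by rewrite -inner_GL_riesz e_eq !inner_GL_gram -scalemxAl dotEZl.
have ew_gt0 : 0 < dotE e w.
  rewrite e_val mulr_gt0 // lt_neqAle inner_GL_ge0 andbT eq_sym.
  by apply/eqP => /inner_GL_eq0 w_eq0; apply: state_neq0; rewrite -w_eq0.
exists l, w; split=> //; apply/eqP; rewrite eq_le.
have /andP[_ -> /=] := e_eff w w_Om.
apply: pure_effect_bound_ge1 e_pure e_neq0 ew_gt0 _ => x x_Om.
rewrite !e_val ler_wpM2l ?(ltW l_gt0) //; exact: extreme_inner_GL_le.
Qed.

Lemma ideal_observable_riesz (A : finType) (f : A -> 'rV[R]_n) :
  ideal_observable Om u f -> forall a, dotE (f a) (riesz (f a)) = dotE u (riesz (f a)).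
Proof.
move=> [[f_eff _] f_ideal] a; have [k [e [I [e_pi fa_eq]]]] := f_ideal a.
have sumI_ge1 i w : i \in I -> Om w -> dotE (e i) w = 1 ->
    1 <= \sum_(j in I) dotE (e j) w.
  move=> iI w_Om ei_w; rewrite (bigD1 i) //= ei_w lerDl.
  by apply: sumr_ge0 => j _; case/andP: ((e_pi j).1.1 w w_Om).
apply/eqP; rewrite -subr_eq0 -dotEBl; apply/eqP.
case: fa_eq => fa_eq.
  rewrite {2}fa_eq riesz_sum dotE_sumr; apply: big1 => i iI.
  have [l [w [_ w_Om -> ei_w]]] := pure_indecomposable_riesz (e_pi i).1 (e_pi i).2.
  suff fa_w : dotE (f a) w = 1 by rewrite dotEZr dotEBl fa_w u_unit // subrr mulr0.
  apply/eqP; rewrite eq_le; have /andP[_ -> /=] := f_eff a w w_Om.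
  by rewrite fa_eq dotE_suml (sumI_ge1 i).
have -> : f a - u = - \sum_(i in I) e i by rewrite fa_eq addrAC subrr add0r.
rewrite dotENl dotE_suml big1 ?oppr0 // => i iI; rewrite dotE_riesz_sym.
have [l [w [_ w_Om -> ei_w]]] := pure_indecomposable_riesz (e_pi i).1 (e_pi i).2.
suff fa_w : dotE (f a) w = 0 by rewrite dotEZr fa_w mulr0.
apply/eqP; rewrite eq_le; have /andP[-> _] := f_eff a w w_Om.
by rewrite fa_eq dotEBl u_unit // dotE_suml subr_le0 (sumI_ge1 i).
Qed.

Lemma effect_riesz_ge0 e e' : effects Om e -> effects Om e' -> 0 <= dotE e (riesz e').
Proof.
move=> e_eff /effect_riesz_decomp[l [w [l_ge0 w_Om -> _]]].
by rewrite dotEZr mulr_ge0 //; case/andP: (e_eff w w_Om).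
Qed.

Lemma werner_D_riesz_bound (A : finType) (d : A -> A -> R) (f ft : A -> 'rV[R]_n)
    (r : R) (a' : A) :
  metric d -> ideal_observable Om u f -> (werner_D Om d ft f <= r%:E)%E ->
  \sum_a d a a' * dotE (ft a) (riesz (f a')) <= dotE u (riesz (f a')) * r.
Proof.
move=> d_metric f_ideal D_le; have [[f_eff [f_sum _]] _] := f_ideal.
have [l [w [l_ge0 w_Om fa'_eq u_fa']]] := effect_riesz_decomp (f_eff a').
rewrite u_fa' fa'_eq; under eq_bigr => a _ do rewrite dotEZr mulrCA.
rewrite -mulr_sumr; have [->|l_neq0] := eqVneq l 0; first by rewrite !mul0r.
apply: (ler_wpM2l l_ge0).
have fa'_w : dotE (f a') w = 1.
  have := ideal_observable_riesz f_ideal a'.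
  rewrite fa'_eq !dotEZr u_unit // mulr1 => fa'_l.
  by apply: (mulfI l_neq0); rewrite fa'_l mulr1.
rewrite -lee_fin; apply: le_trans D_le.
exact: werner_D_ge_dist d_metric f_eff f_sum u_unit w_Om fa'_w.
Qed.

Lemma marginal_error_bound (A J : finType) (d : A -> A -> R) (f : A -> 'rV[R]_n)
    (m : J -> 'rV[R]_n) (pi : J -> A) (l : J -> R) (w : J -> 'rV[R]_n) :
  metric d -> ideal_observable Om u f -> observable Om u m ->
  (forall p, riesz (m p) = l p *: w p) -> \sum_p l p = dotE u (riesz u) ->
  exists D, [/\ 0 <= D, (D%:E <= werner_D Om d (marginal pi m) f)%E &
    \sum_p l p * \sum_a' d a' (pi p) * dotE (f a') (w p) <= (\sum_p l p) * D].
Proof.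
move=> d_metric f_ideal [m_eff _] m_eq l_sum; have [[f_eff [f_sum _]] _] := f_ideal.
rewrite l_sum -(sum_dotE_decomp _ _ m_eq).
set X := \sum_p _.
have X_ge0 : 0 <= X.
  apply: sumr_ge0 => p _; apply: sumr_ge0 => a' _.
  by rewrite mulr_ge0 ?effect_riesz_ge0 //; case: d_metric.
have X_le r : (werner_D Om d (marginal pi m) f <= r%:E)%E -> X <= dotE u (riesz u) * r.
  move=> D_le; rewrite /X exchange_big /= -[in riesz u]f_sum riesz_sum.
  rewrite dotE_sumr mulr_suml.
  apply: ler_sum => a' _; have [_ [_ [d_sym _]]] := d_metric.
  under eq_bigr => p _ do rewrite dotE_riesz_sym d_sym.
  rewrite -(sum_marginal pi m (fun a => d a a')).
  exact: werner_D_riesz_bound.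
have := werner_D_ge0 (marginal pi m) f d_metric Om_neq0.
case W: werner_D => [r| |] // r_ge0.
  by exists r; split; [rewrite -lee_fin | | apply: X_le; rewrite W].
have U_gt0 := unit_riesz_gt0.
exists (X / dotE u (riesz u)); split; first by rewrite divr_ge0 // ltW.
  by rewrite leey.
by rewrite mulrC divfK // gt_eqF.
Qed.

Lemma observable_riesz_decomp (J : finType) (m : J -> 'rV[R]_n) : observable Om u m ->
  exists (l : J -> R) (w : J -> 'rV[R]_n), [/\ forall p, 0 <= l p, forall p, Om (w p),
    forall p, riesz (m p) = l p *: w p & \sum_p l p = dotE u (riesz u)].
Proof.
move=> [m_eff [m_sum _]].
have decomp p : exists lw : R * 'rV[R]_n, [/\ 0 <= lw.1, Om lw.2,
    riesz (m p) = lw.1 *: lw.2 & dotE u (riesz (m p)) = lw.1].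
  by have [l [w decomp]] := effect_riesz_decomp (m_eff p); exists (l, w).
have [lw lw_spec] := choice decomp.
exists (fun p => (lw p).1), (fun p => (lw p).2).
split=> [p|p|p|]; try by case: (lw_spec p).
rewrite -[in riesz u]m_sum riesz_sum dotE_sumr.
by apply: eq_bigr => p _; case: (lw_spec p) => _ _ _ ->.
Qed.

End SelfDualCone.

Theorem corollary3p1 (R : realType) (N : nat)
  (Om : set 'rV[R]_N.+1) (u : 'rV[R]_N.+1)
  (hOm : state_space Om) (hu : unit_effect Om u)
  (htrans : transitive_ss Om) (hsd : self_dual_GL Om)
  (A B : finType) (dA : A -> A -> R) (dB : B -> B -> R)
  (hdA : metric dA) (hdB : metric dB)
  (f : A -> 'rV[R]_N.+1) (g : B -> 'rV[R]_N.+1)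
  (hf : ideal_observable Om u f) (hg : ideal_observable Om u g)
  (m : A * B -> 'rV[R]_N.+1) (hm : observable Om u m)
  (eps1 eps2 : R) (he1 : 0 < eps1 <= 1) (he2 : 0 < eps2 <= 1)
  (he12 : eps1 + eps2 <= 1) :
  exists w, Om w /\
    lee (eps1 / 2 * overall_width dA f (eps1 + eps2) w)%:E
        (werner_D Om dA (fun a => \sum_(b : B) m (a, b)) f) /\
    lee (eps2 / 2 * overall_width dB g (eps1 + eps2) w)%:E
        (werner_D Om dB (fun b => \sum_(a : A) m (a, b)) g).
Proof.
have [mu [mu_haar cone_sd]] := hsd; have Om_neq0 := state_space_neq0 hOm.
have [[e1_gt0 _] [e2_gt0 _]] := (andP he1, andP he2).
have e_ge0 : 0 <= eps1 + eps2 by rewrite addr_ge0 // ltW.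
have -> : (fun a => \sum_b m (a, b)) = marginal fst m.
  by apply: funext => a; rewrite marginal_fst.
have -> : (fun b => \sum_a m (a, b)) = marginal snd m.
  by apply: funext => b; rewrite marginal_snd.
have [l [w [l_ge0 w_Om m_eq l_sum]]] :=
  observable_riesz_decomp hOm hu mu_haar cone_sd hm.
have [DF [DF_ge0 DF_le XF_le]] := marginal_error_bound hOm hu mu_haar cone_sd
  Om_neq0 htrans fst hdA hf hm m_eq l_sum.
have [DG [DG_ge0 DG_le XG_le]] := marginal_error_bound hOm hu mu_haar cone_sd
  Om_neq0 htrans snd hdB hg hm m_eq l_sum.
have l_sum_gt0 : 0 < \sum_p l p.
  by rewrite l_sum (unit_riesz_gt0 hOm hu mu_haar cone_sd Om_neq0).
have [p [_ [XF_p XG_p]]] := exists_weight_both_bounds l_ge0 l_sum_gt0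
  (fun p => dist_moment_ge0 p.1 hdA hf.1.1 (w_Om p))
  (fun p => dist_moment_ge0 p.2 hdB hg.1.1 (w_Om p))
  DF_ge0 DG_ge0 e1_gt0 e2_gt0 XF_le XG_le.
exists (w p); split=> //; split.
  exact: overall_width_le_werner hdA hf.1.1 hf.1.2.1 hu (w_Om p) DF_ge0 DF_le
    e1_gt0 e_ge0 XF_p.
exact: overall_width_le_werner hdB hg.1.1 hg.1.2.1 hu (w_Om p) DG_ge0 DG_le
  e2_gt0 e_ge0 XG_p.
Qed.
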